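(* Let $\Gamma$ be a Coxeter graph of spherical type or of affine type, and let $\mathcal X\subset\Phi[\Gamma]$ be free of infinity with respect to $\hat M$, i.e. $\hat m_{\beta,\gamma}\neq\infty$ for all $\beta,\gamma\in\mathcal X$. Then $\mathcal X$ is finite, the full subgraph $\hat\Gamma_{\mathcal X}$ of $\hat\Gamma$ spanned by $\mathcal X$ is of spherical type or of affine type, and $n_{\mathrm{sph}}(A[\hat\Gamma_{\mathcal X}])\le n_{\mathrm{sph}}(A[\Gamma])$.
   Context: A Coxeter matrix on a countable set $S$ is a symmetric matrix $M=(m_{s,t})_{s,t\in S}$ with entries in $\mathbb{N}\cup\{\infty\}$ with $m_{s,s}=1$ and $m_{s,t}=m_{t,s}\ge2$ for $s\ne t$; it is encoded by a Coxeter graph $\Gamma$ with vertex set $S$. $W[\Gamma]=\langle S\mid s^2=1,\ (st)^{m_{s,t}}=1 \text{ for } m_{s,t}\ne\infty\rangle$ is the Coxeter group and $A[\Gamma]$ the Artin group. Let $V$ be the real vector space with basis $\{\alpha_s\mid s\in S\}$ and canonical symmetric bilinear form $\langle\alpha_s,\alpha_t\rangle=-2\cos(\pi/m_{s,t})$ if $m_{s,t}\neq\infty$ and $-2$ otherwise; $W[\Gamma]$ acts on $V$ by $s(v)=v-\langle v,\alpha_s\rangle\alpha_s$, and $\Phi[\Gamma]=\{w(\alpha_s)\mid w\in W[\Gamma],s\in S\}$ is the root system. Define the Coxeter matrix $\hat M=(\hat m_{\beta,\gamma})_{\beta,\gamma\in\Phi[\Gamma]}$ by $\hat m_{\beta,\beta}=1$,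 and for $\beta\neq\gamma$: $\hat m_{\beta,\gamma}=m_{s,t}$ if there exist $w\in W[\Gamma]$, $s,t\in S$ with $\beta=w(\alpha_s)$, $\gamma=w(\alpha_t)$, $m_{s,t}\neq\infty$ (independent of choices), and $\hat m_{\beta,\gamma}=\infty$ otherwise; $\hat\Gamma$ is its Coxeter graph. A finite Coxeter graph is of spherical type if its Coxeter group is finite (equivalently its canonical bilinear form is positive definite), and of affine type if its canonical bilinear form is positive semi-definite but not positive definite. For a Coxeter graph $\Gamma$ with vertex set $S$ and $X\subset S$, $\Gamma_X$ is the full subgraph spanned by $X$; the spherical dimension $n_{\mathrm{sph}}(A[\Gamma])$ is the maximum of $|X|$ over all finite $X\subset S$ with $\Gamma_X$ of spherical type. *)

From HB Require Import structures.
From mathcomp Require Import all_boot all_order all_algebra.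
From mathcomp Require Import boolp classical_sets cardinality reals trigo.
Set Implicit Arguments. Unset Strict Implicit. Unset Printing Implicit Defensive.
Import Order.TTheory GRing.Theory Num.Theory.
Local Open Scope ring_scope.

(* A Coxeter matrix on the finite set 'I_n; None encodes the entry infinity. *)
Definition coxmat (n : nat) := 'I_n -> 'I_n -> option nat.

Definition is_coxeter_matrix (n : nat) (m : coxmat n) : Prop :=
  (forall s, m s s = Some 1%N) /\
  (forall s t, m s t = m t s) /\
  (forall s t k, s != t -> m s t = Some k -> (2 <= k)%N).

Section Cox.
Variable R : realType.

(* Gram matrix of the canonical bilinear form: <a_s,a_t> = -2 cos(pi/m_st), or -2 if m_st = oo. *)
Definition gram (n : nat) (m : coxmat n) : 'M[R]_n :=
  \matrix_(i, j) match m i j with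
                 | Some k => - 2 * cos (pi / k%:R)
                 | None => - 2
                 end.

Definition bil (n : nat) (m : coxmat n) (u v : 'rV[R]_n) : R :=
  (u *m gram m *m v^T) 0 0.

Definition alpha (n : nat) (s : 'I_n) : 'rV[R]_n := delta_mx 0 s.

Definition refl (n : nat) (m : coxmat n) (s : 'I_n) (v : 'rV[R]_n) : 'rV[R]_n :=
  v - bil m v (alpha s) *: alpha s.

(* action of the element of W represented by the word w = s1 s2 ... sk *)
Definition act (n : nat) (m : coxmat n) (w : seq 'I_n) (v : 'rV[R]_n) : 'rV[R]_n :=
  foldr (refl m) v w.

Definition rootsys (n : nat) (m : coxmat n) : set 'rV[R]_n :=
  [set b | exists (w : seq 'I_n) (s : 'I_n), b = act m w (alpha s)].

Definition hat_witness (n : nat) (m : coxmat n) (b c : 'rV[R]_n) (p : nat) : Prop :=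
  exists (w : seq 'I_n) (s t : 'I_n),
    b = act m w (alpha s) /\ c = act m w (alpha t) /\ m s t = Some p.

(* the Coxeter matrix hat M on Phi[Gamma] (value independent of choices, per the paper) *)
Definition hatm (n : nat) (m : coxmat n) (b c : 'rV[R]_n) : option nat :=
  if b == c then Some 1%N else
  match pselect (exists p, hat_witness m b c p) with
  | left H => Some (projT1 (cid H))
  | right _ => None
  end.

(* the full subgraph hat Gamma_X, for X enumerated (without repetition) by the list l *)
Definition hat_sub (n : nat) (m : coxmat n) (l : seq 'rV[R]_n) : coxmat (size l) :=
  fun i j => hatm m (nth 0 l i) (nth 0 l j).

(* full subgraph Gamma_Y is of spherical type: form positive definite on span{alpha_s, s in Y} *)
Definition spherical_on (n : nat) (m : coxmat n) (Y : {set 'I_n}) : Prop :=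
  forall v : 'rV[R]_n, v != 0 -> (forall i, i \notin Y -> v 0 i = 0) -> 0 < bil m v v.

Definition spherical (n : nat) (m : coxmat n) : Prop :=
  forall v : 'rV[R]_n, v != 0 -> 0 < bil m v v.

Definition affine (n : nat) (m : coxmat n) : Prop :=
  (forall v : 'rV[R]_n, 0 <= bil m v v) /\ ~ spherical m.

End Cox.

Definition nsph (R : realType) (n : nat) (m : coxmat n) : nat :=
  \max_(Y : {set 'I_n} | `[< spherical_on R m Y >]) #|Y|.

(* The canonical form is positive semi-definite and every root has norm 2. If
   hat m_{b,c} = p is finite for roots b <> c, then b = w(alpha_s) and
   c = w(alpha_t) with m_{s,t} = p, so <b,c> = -2 cos(pi/p) <= 0. A family of
   pairwise obtuse non-isotropic vectors in a semi-definite space of dimension n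
   has at most 2n members: a vector u with <u,b> <> 0 for every member splits it
   into two halves, each lying in an open half-space and hence linearly
   independent. So X is finite. The Gram matrix of hat Gamma_X is L G L^T, where
   the rows of L enumerate X; it is therefore semi-definite, and any Y on which it
   is definite has |Y| <= rank G. Conversely G is definite on the indices of
   rank G independent rows of G, so rank G <= n_sph(A[Gamma]). *)

From HB Require Import structures.
From mathcomp Require Import all_boot all_order all_algebra.
From mathcomp Require Import boolp classical_sets cardinality reals trigo.
From mathcomp Require Import ring lra zify.
Set Implicit Arguments.
Unset Strict Implicit.
Unset Printing Implicit Defensive.
Import Order.TTheory GRing.Theory Num.Theory.
Local Open Scope ring_scope.

Lemma free_size_le (K : fieldType) (n : nat) (s : seq 'rV[K]_n) :
  free s -> (size s <= n)%N.
Proof.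
move=> /eqP <-; apply: leq_trans (dimvS (subvf _)) _.
by rewrite dimvf dim_matrix mul1r.
Qed.

Section RowSelection.
Variables (K : fieldType) (k n : nat) (f : 'I_k -> 'I_n).

Lemma mul_rowsub1_out (x : 'rV[K]_k) i :
  i \notin codom f -> (x *m rowsub f 1%:M) 0 i = 0.
Proof.
move=> i_out; rewrite mxE big1 // => j _; rewrite !mxE.
have fj_neq : f j != i by apply: contraNneq i_out => <-; exact: codom_f.
by rewrite (negbTE fj_neq) mulr0.
Qed.

Hypothesis f_inj : injective f.

Lemma mul_rowsub1_img (x : 'rV[K]_k) j : (x *m rowsub f 1%:M) 0 (f j) = x 0 j.
Proof.
rewrite mxE (bigD1 j) //= !mxE eqxx mulr1 big1 ?addr0 // => l lj.
by rewrite !mxE (inj_eq f_inj) (negbTE lj) mulr0.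
Qed.

Lemma rowsub1_free : row_free (rowsub f 1%:M : 'M[K]_(k, n)).
Proof.
by apply/inj_row_free => x x0; apply/rowP => j; rewrite -mul_rowsub1_img x0 !mxE.
Qed.

Lemma row_supported_rowsub1 (v : 'rV[K]_n) :
  (forall i, i \notin codom f -> v 0 i = 0) -> v = \row_j v 0 (f j) *m rowsub f 1%:M.
Proof.
move=> v_supp; apply/rowP => i; have [/codomP[j ->]|i_out] := boolP (i \in codom f).
  by rewrite mul_rowsub1_img mxE.
by rewrite mul_rowsub1_out // v_supp.
Qed.

End RowSelection.

Section MatrixForm.
Variables (R : realFieldType) (n : nat) (G : 'M[R]_n).

Definition mxform (u v : 'rV[R]_n) : R := (u *m G *m v^T) 0 0.

Lemma mxformDl u1 u2 v : mxform (u1 + u2) v = mxform u1 v + mxform u2 v.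
Proof. by rewrite /mxform !mulmxDl mxE. Qed.

Lemma mxformZl a u v : mxform (a *: u) v = a * mxform u v.
Proof. by rewrite /mxform -!scalemxAl mxE. Qed.

Lemma mxformDr u v1 v2 : mxform u (v1 + v2) = mxform u v1 + mxform u v2.
Proof. by rewrite /mxform linearD /= mulmxDr mxE. Qed.

Lemma mxformZr a u v : mxform u (a *: v) = a * mxform u v.
Proof. by rewrite /mxform linearZ /= -scalemxAr mxE. Qed.

Lemma mxformNl u v : mxform (- u) v = - mxform u v.
Proof. by rewrite -scaleN1r mxformZl mulN1r. Qed.

Lemma mxformNr u v : mxform u (- v) = - mxform u v.
Proof. by rewrite -scaleN1r mxformZr mulN1r. Qed.

Lemma mxform0l v : mxform 0 v = 0.
Proof. by rewrite -(scale0r 0) mxformZl mul0r. Qed.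

Lemma mxform0r u : mxform u 0 = 0.
Proof. by rewrite -(scale0r 0) mxformZr mul0r. Qed.

Lemma mxform_sumr (I : finType) u (F : I -> 'rV[R]_n) :
  mxform u (\sum_i F i) = \sum_i mxform u (F i).
Proof. exact: (big_morph _ (mxformDr u) (mxform0r u)). Qed.

Lemma mxform_suml (I : finType) v (F : I -> 'rV[R]_n) :
  mxform (\sum_i F i) v = \sum_i mxform (F i) v.
Proof. exact: (big_morph (mxform^~ v) (fun x y => mxformDl x y v) (mxform0l v)). Qed.

Lemma mxform_comb (I : finType) (a b : I -> R) (F : I -> 'rV[R]_n) :
  mxform (\sum_i a i *: F i) (\sum_j b j *: F j) =
  \sum_i \sum_j a i * b j * mxform (F i) (F j).
Proof.
rewrite mxform_suml; apply: eq_bigr => i _.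
rewrite mxformZl mxform_sumr mulr_sumr; apply: eq_bigr => j _.
by rewrite mxformZr; ring.
Qed.

Lemma mxform_deltar u j : mxform u (delta_mx 0 j) = (u *m G) 0 j.
Proof. by rewrite /mxform trmx_delta -colE mxE. Qed.

Lemma nonneg_comb_eq0 (I : finType) u (F : I -> 'rV[R]_n) (k : I -> R) :
  (forall i, 0 < mxform u (F i)) -> (forall i, 0 <= k i) ->
  mxform u (\sum_i k i *: F i) = 0 -> forall i, k i = 0.
Proof.
move=> F_pos k_ge0; rewrite mxform_sumr => sum0 i.
have terms_ge0 j : true -> 0 <= mxform u (k j *: F j).
  by rewrite mxformZr mulr_ge0 // ltW.
have /(_ i isT)/eqP := psumr_eq0P (P := xpredT) terms_ge0 sum0.
by rewrite mxformZr mulf_eq0 (gt_eqF (F_pos i)) orbF => /eqP.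
Qed.

Lemma exists_nonorth (s : seq 'rV[R]_n) :
  {in s, forall v, mxform v v != 0} -> exists u, {in s, forall v, mxform u v != 0}.
Proof.
elim: s => [|v s IHs] s_aniso; first by exists 0.
have [|u u_s] := IHs; first by move=> x xs; rewrite s_aniso // in_cons xs orbT.
have vv0 : mxform v v != 0 by rewrite s_aniso // in_cons eqxx.
have [uv0|uv] := eqVneq (mxform u v) 0; last first.
  by exists u => x; rewrite in_cons => /predU1P[->|/u_s].
(* u + t v works for all t > 0 smaller than every |<u,x>| / (|<v,x>| + 1). *)
pose bound x := `|mxform u x| / (`|mxform v x| + 1).
pose t := \big[Num.min/1]_(x <- s) bound x.
have bound_gt0 x : x \in s -> 0 < bound x.
  move=> xs; rewrite divr_gt0 ?normr_gt0 ?u_s //.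
  by rewrite ltr_pwDr ?normr_ge0.
have t_gt0 : 0 < t.
  rewrite /t big_seq; apply: (big_ind (fun y => 0 < y)) => //= x y.
  by rewrite lt_min => -> ->.
exists (u + t *: v) => x; rewrite in_cons mxformDl mxformZl.
case/predU1P=> [->|xs]; first by rewrite uv0 add0r mulf_neq0 ?(gt_eqF t_gt0).
have t_le : t <= bound x by rewrite /t (big_rem_AC _ _ _ _ xs) /= ge_min lexx.
apply/eqP => sum0; have uxE : mxform u x = - (t * mxform v x).
  by apply/eqP; rewrite -addr_eq0 sum0.
move: t_le; rewrite /bound uxE normrN normrM gtr0_norm //.
rewrite ler_pdivlMr ?ltr_pwDr ?normr_ge0 //.
have := normr_ge0 (mxform v x); nra.
Qed.

Definition mxposdef_on (Y : {set 'I_n}) :=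
  forall v : 'rV[R]_n, v != 0 -> (forall i, i \notin Y -> v 0 i = 0) ->
    0 < mxform v v.

Section Symmetric.
Hypothesis G_sym : G^T = G.

Lemma mxformC u v : mxform u v = mxform v u.
Proof.
have tr1 (A : 'M[R]_1) : A 0 0 = A^T 0 0 by rewrite mxE.
by rewrite /mxform tr1 !trmx_mul trmxK G_sym mulmxA.
Qed.

Section PositiveSemidefinite.
Hypothesis G_psd : forall v, 0 <= mxform v v.

(* Since <z,z> = 0, <z + t y, z + t y> = t^2 a + 2 t b >= 0 for all t; take
   t = -b / (a + 1). *)
Lemma psd_isotropic_orth y z : mxform z z = 0 -> mxform y z = 0.
Proof.
move=> zz0; set a := mxform y y; set b := mxform y z.
have a_ge0 : 0 <= a by exact: G_psd.
have quad t : 0 <= t * t * a + 2 * t * b.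
  have := G_psd (z + t *: y).
  rewrite !(mxformDl, mxformDr, mxformZl, mxformZr) zz0 (mxformC z y) -/a -/b.
  lra.
have a1 : a + 1 != 0 by apply/lt0r_neq0; lra.
have := quad (- b / (a + 1)); set t := - b / (a + 1).
have tE : t * (a + 1) = - b by rewrite /t divfK.
nra.
Qed.

Lemma psd_isotropic_ker z : mxform z z = 0 -> z *m G = 0.
Proof.
move=> zz0; apply/rowP => j; rewrite [RHS]mxE -mxform_deltar mxformC.
exact: psd_isotropic_orth.
Qed.

Lemma obtuse_free (s : seq 'rV[R]_n) u :
  uniq s -> {in s &, forall a b, a != b -> mxform a b <= 0} ->
  {in s, forall a, 0 < mxform u a} -> free s.
Proof.
move=> s_uniq s_obtuse u_pos.
rewrite -[s]/(tval (in_tuple s)); apply/freeP => k k0 i.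
(* Splitting k into its positive and negative parts gives two expressions of one
   vector z, whose norm is then a sum of nonpositive terms. *)
pose kp j := if 0 <= k j then k j else 0.
pose kn j := if 0 <= k j then 0 else - k j.
have kp_ge0 j : 0 <= kp j by rewrite /kp; case: ifP.
have kn_ge0 j : 0 <= kn j by rewrite /kn; case: ifPn => // /negP; lra.
have kE j : k j = kp j - kn j by rewrite /kp /kn; case: ifP => _; lra.
pose z := \sum_j kp j *: s`_j.
have zE : z = \sum_j kn j *: s`_j.
  apply/eqP; rewrite -subr_eq0 /z -sumrB -[X in _ == X]k0.
  by apply/eqP/eq_bigr => j _; rewrite -scalerBl -kE.
have zz_le0 : mxform z z <= 0.
  rewrite {2}zE /z mxform_comb; apply: sumr_le0 => j _; apply: sumr_le0 => l _.
  have [<-|jl] := eqVneq j l.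
    by rewrite /kp /kn; case: ifP; rewrite ?(mulr0, mul0r).
  apply: mulr_ge0_le0; first exact: mulr_ge0.
  by apply: s_obtuse; rewrite ?mem_nth ?nth_uniq.
have u_z0 : mxform u z = 0.
  by apply: psd_isotropic_orth; apply/le_anti; rewrite zz_le0 G_psd.
have u_nth_pos (j : 'I_(size s)) : 0 < mxform u s`_j by exact/u_pos/mem_nth.
have kp0 := nonneg_comb_eq0 u_nth_pos kp_ge0 u_z0.
have kn0 := nonneg_comb_eq0 u_nth_pos kn_ge0 (etrans (congr1 _ (esym zE)) u_z0).
by rewrite kE kp0 kn0 subr0.
Qed.

Lemma obtuse_size_le (s : seq 'rV[R]_n) :
  uniq s -> {in s &, forall a b, a != b -> mxform a b <= 0} ->
  {in s, forall a, mxform a a != 0} -> (size s <= n + n)%N.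
Proof.
move=> s_uniq s_obtuse s_aniso; have [u u_s] := exists_nonorth s_aniso.
have filter_obtuse P : {in filter P s &, forall a b, a != b -> mxform a b <= 0}.
  by move=> a b; rewrite !mem_filter => /andP[_ as_] /andP[_ bs]; apply: s_obtuse.
rewrite -(count_predC [pred a | 0 < mxform u a] s) -!size_filter.
apply: leq_add; apply: free_size_le.
  apply: (obtuse_free (u := u)); rewrite ?filter_uniq //.
  by move=> a; rewrite mem_filter => /andP[].
apply: (obtuse_free (u := - u)); rewrite ?filter_uniq //.
move=> a; rewrite mem_filter /= -leNgt mxformNl oppr_gt0 lt_neqAle.
by case/andP=> -> /u_s ->.
Qed.

Lemma obtuse_set_finite (X : set 'rV[R]_n) :
  (forall a b, X a -> X b -> a != b -> mxform a b <= 0) ->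
  (forall a, X a -> mxform a a != 0) -> finite_set X.
Proof.
move=> X_obtuse X_aniso; have [//|infX] := pselect (finite_set X).
have [B BX Bsize] := infinite_set_fset (n + n).+1 infX.
suff : (size (finmap.enum_fset B) <= n + n)%N by rewrite leqNgt Bsize.
apply: obtuse_size_le (finmap.fset_uniq B) _ _.
- by move=> a b aB bB; apply: X_obtuse; apply: BX.
- by move=> a aB; apply: X_aniso; apply: BX.
Qed.

Lemma psd_posdef_rank : exists Y, mxposdef_on Y /\ #|Y| = \rank G.
Proof.
pose f := maxrankfun G; have f_inj : injective f := @maxrankfun_inj _ _ _ G.
exists [set i in codom f]; split; last by rewrite cardsE card_codom ?card_ord.
move=> v v0 v_supp; rewrite lt_def G_psd andbT; apply: contra v0.
move=> /eqP /psd_isotropic_ker vG0.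
have vE : v = \row_j v 0 (f j) *m rowsub f 1%:M.
  by apply: row_supported_rowsub1 => // i i_out; rewrite v_supp ?inE.
have x0 : \row_j v 0 (f j) = 0.
  apply: (row_free_inj (maxrowsub_free G)).
  by rewrite mul0mx rowsubE mulmxA -vE vG0.
by rewrite vE x0 mul0mx.
Qed.

End PositiveSemidefinite.
End Symmetric.
End MatrixForm.

Lemma mxform_mulmx (R : realFieldType) (N n : nat) (G : 'M[R]_n)
    (L : 'M[R]_(N, n)) c d :
  mxform (L *m G *m L^T) c d = mxform G (c *m L) (d *m L).
Proof. by rewrite /mxform !trmx_mul !mulmxA. Qed.

Lemma mulmx_trmxE (R : realFieldType) (N1 N2 n : nat) (G : 'M[R]_n)
    (A : 'M[R]_(N1, n)) (B : 'M[R]_(N2, n)) i j :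
  (A *m G *m B^T) i j = mxform G (row i A) (row j B).
Proof.
rewrite /mxform !mxE; apply: eq_bigr => k _; rewrite !mxE; congr (_ * _).
by apply: eq_bigr => l _; rewrite !mxE.
Qed.

Lemma mxposdef_on_card_le_rank (R : realFieldType) (N n : nat) (G : 'M[R]_n)
    (L : 'M[R]_(N, n)) (Y : {set 'I_N}) :
  mxposdef_on (L *m G *m L^T) Y -> (#|Y| <= \rank G)%N.
Proof.
move=> Y_posdef; pose f := @enum_val _ (mem Y).
pose M := rowsub f 1%:M *m L.
suff /eqnP <- : row_free (M *m G *m M^T).
  exact: leq_trans (mxrankM_maxl _ _) (mxrankM_maxr _ _).
have f_inj : injective f := @enum_val_inj _ (mem Y).
apply/inj_row_free => x xH0; apply: (row_free_inj (rowsub1_free R f_inj)).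
rewrite mul0mx; apply/eqP; apply: contraT => /Y_posdef c_pos.
have c_supp i : i \notin Y -> (x *m rowsub f 1%:M) 0 i = 0.
  move=> iY; apply: mul_rowsub1_out; apply: contra iY => /codomP[j ->].
  exact: enum_valP.
have cE : mxform (L *m G *m L^T) (x *m rowsub f 1%:M) (x *m rowsub f 1%:M) =
    (x *m (M *m G *m M^T) *m x^T) 0 0 by rewrite /mxform /M !trmx_mul !mulmxA.
by move: (c_pos c_supp); rewrite cE xH0 mul0mx mxE ltxx.
Qed.

Lemma cos_pi_div_ge0 (R : realType) (p : nat) :
  (2 <= p)%N -> 0 <= cos (pi / p%:R : R).
Proof.
move=> p_ge2; have p_gt0 : (0 : R) < p%:R by rewrite ltr0n; lia.
have pip_ge0 : 0 <= pi / p%:R :> R by rewrite divr_ge0 ?pi_ge0 ?ltW.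
apply: cos_ge0_pihalf; apply/andP; split; first by have := pi_ge0 R; lra.
by rewrite ler_pM2l ?pi_gt0 // lef_pV2 ?posrE // (ler_nat R 2 p).
Qed.

Section Coxeter.
Variables (R : realType) (n : nat) (m : coxmat n).
Hypothesis m_cox : is_coxeter_matrix m.

Local Notation bil := (@bil R n m).

Lemma bilE u v : bil u v = mxform (gram R m) u v.
Proof. by []. Qed.

Lemma gram_sym : (gram R m)^T = gram R m.
Proof. by case: m_cox => _ [m_sym _]; apply/matrixP => i j; rewrite !mxE m_sym. Qed.

Lemma bil_alpha s t : bil (alpha R s) (alpha R t) = gram R m s t.
Proof. by rewrite /bil /alpha trmx_delta -rowE -colE !mxE. Qed.

Lemma bil_alpha_self s : bil (alpha R s) (alpha R s) = 2.
Proof.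
by case: m_cox => m_diag _; rewrite bil_alpha mxE m_diag divr1 cospi; lra.
Qed.

Lemma bil_refl s u v : bil (refl m s u) (refl m s v) = bil u v.
Proof.
rewrite /refl bilE !(mxformDl, mxformDr, mxformNl, mxformNr, mxformZl, mxformZr).
by rewrite -!bilE bil_alpha_self !bilE (mxformC gram_sym (alpha R s) v); lra.
Qed.

Lemma bil_act w u v : bil (act m w u) (act m w v) = bil u v.
Proof. by elim: w => //= s w IHw; rewrite bil_refl. Qed.

Lemma bil_root_self (b : 'rV[R]_n) : rootsys m b -> bil b b = 2.
Proof. by case=> w [s ->]; rewrite bil_act bil_alpha_self. Qed.

Lemma hatm_witness (b c : 'rV[R]_n) p :
  b != c -> hatm m b c = Some p -> hat_witness m b c p.
Proof.
rewrite /hatm => /negbTE ->; case: pselect => [H|//].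
by case: (cid H) => q q_wit [<-].
Qed.

Lemma hatm_cos_bil (b c : 'rV[R]_n) p : rootsys m b -> hatm m b c = Some p ->
  - 2 * cos (pi / p%:R) = bil b c.
Proof.
move=> b_root; have [<-|bc] := eqVneq b c.
  by rewrite /hatm eqxx => -[<-]; rewrite bil_root_self // divr1 cospi; lra.
case/(hatm_witness bc) => w [s [t [-> [-> m_st]]]].
by rewrite bil_act bil_alpha mxE m_st.
Qed.

Lemma bil_hatm_le0 (b c : 'rV[R]_n) :
  b != c -> hatm m b c <> None -> bil b c <= 0.
Proof.
move=> bc; case E: hatm => [p|//] _.
have [w [s [t [bE [cE m_st]]]]] := hatm_witness bc E.
have st : s != t by apply: contraNneq bc => st; rewrite bE cE st.
case: m_cox => _ [_ m_ge2]; have := cos_pi_div_ge0 R (m_ge2 _ _ _ st m_st).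
by rewrite bE cE bil_act bil_alpha mxE m_st; lra.
Qed.

Lemma gram_hat_sub (l : seq 'rV[R]_n) :
  {in l, forall b, rootsys m b} -> {in l &, forall b c, hatm m b c <> None} ->
  gram R (@hat_sub R n m l) =
  (\matrix_(i < size l) nth 0 l i) *m gram R m *m (\matrix_(i < size l) nth 0 l i)^T.
Proof.
move=> l_roots l_free; apply/matrixP => i j; rewrite mulmx_trmxE !rowK mxE /hat_sub.
have [li lj] := (mem_nth 0 (ltn_ord i), mem_nth 0 (ltn_ord j)).
case E: hatm => [p|]; first exact: hatm_cos_bil (l_roots _ li) E.
by have := l_free _ _ li lj.
Qed.

Lemma rank_le_nsph : (forall v, 0 <= bil v v) -> (\rank (gram R m) <= nsph R m)%N.
Proof.
move=> G_psd; have [Y [Y_posdef <-]] := psd_posdef_rank gram_sym G_psd.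
by apply: (leq_bigmax_cond (F := fun Y : {set 'I_n} => #|Y|)); apply/asboolP.
Qed.

End Coxeter.

Lemma nsph_le_rank (R : realType) (N n : nat) (mh : coxmat N) (m : coxmat n)
    (L : 'M[R]_(N, n)) :
  gram R mh = L *m gram R m *m L^T -> (nsph R mh <= \rank (gram R m))%N.
Proof.
move=> hatG; apply/bigmax_leqP => Y /asboolP Y_sph.
by apply: (mxposdef_on_card_le_rank (L := L)); rewrite -hatG.
Qed.

Lemma spherical_or_affine_psd (R : realType) (n : nat) (m : coxmat n) :
  spherical R m \/ affine R m -> forall v : 'rV[R]_n, 0 <= bil m v v.
Proof.
case=> [m_sph v|[]//]; have [->|v0] := eqVneq v 0; first by rewrite bilE mxform0l.
exact/ltW/m_sph.
Qed.

Lemma psd_spherical_or_affine (R : realType) (n : nat) (m : coxmat n) :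
  (forall v : 'rV[R]_n, 0 <= bil m v v) -> spherical R m \/ affine R m.
Proof. by move=> m_psd; have [|] := pselect (spherical R m); [left|right]. Qed.

Local Open Scope classical_set_scope.

Theorem theorem4p1 (R : realType) (n : nat) (m : coxmat n)
  (Hm : is_coxeter_matrix m)
  (Htype : spherical R m \/ affine R m)
  (X : set 'rV[R]_n)
  (HX : X `<=` @rootsys R n m)
  (Hfree : forall b c, X b -> X c -> @hatm R n m b c <> None) :
  finite_set X /\
  (forall l : seq 'rV[R]_n, uniq l -> (forall x, X x <-> x \in l) ->
     (spherical R (@hat_sub R n m l) \/ affine R (@hat_sub R n m l)) /\
     (nsph R (@hat_sub R n m l) <= nsph R m)%N).
Proof.
have G_psd := spherical_or_affine_psd Htype.
have G_sym := gram_sym R Hm.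
split.
  apply: (obtuse_set_finite G_sym G_psd) => [b c Xb Xc bc|b Xb].
    exact: bil_hatm_le0 bc (Hfree _ _ Xb Xc).
  by rewrite -bilE bil_root_self ?pnatr_eq0 //; apply: HX.
move=> l _ Xl.
have hatG : gram R (@hat_sub R n m l) = _ := gram_hat_sub Hm
  (fun b bl => HX _ (proj2 (Xl b) bl))
  (fun b c bl cl => Hfree _ _ (proj2 (Xl b) bl) (proj2 (Xl c) cl)).
split.
  apply: psd_spherical_or_affine => v; rewrite bilE hatG mxform_mulmx; exact: G_psd.
exact: leq_trans (nsph_le_rank hatG) (rank_le_nsph Hm G_psd).
Qed.
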